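(* Let $k\ge2$ and $c\in\mathcal{S}_k^\beta\setminus\{\mathbf{0}\}$. Then $w_H(c)=L_\beta(k)-q^{\nu(c)}L_\beta(k-1)$, where $L_\beta(m)=q^{(s-1)(m-1)}\frac{q^m-1}{q-1}$.
   Context: Let $R$ be a finite commutative chain ring with maximal ideal $\langle\gamma\rangle$, nilpotency index $s$ and residue field $R/\langle\gamma\rangle\cong\mathbb{F}_q$. Fix coset representatives $T=\{e_0,\dots,e_{q-1}\}$ with $e_0=0,e_1=1$, ordered $e_0<\dots<e_{q-1}$; each $r\in R$ is uniquely $\sum_{i=0}^{s-1}r_i\gamma^i$, $r_i\in T$; order $R$ by $x>y$ iff $x_i>y_i$ in $T$ for the largest $i$ with $x_i\neq y_i$; list $R=\{\rho_0,\dots,\rho_{q^s-1}\}$ increasingly. $\mathbf{a}^{(m)}$ is the constant vector of length $m$. Define $G_1^\alpha=(\rho_0\ \cdots\ \rho_{q^s-1})$ and, for $k>1$, $G_k^\alpha$ as the matrix of $q^s$ column blocks, the $j$-th having first row $\boldsymbol{\rho_j}^{(q^{s(k-1)})}$ and $G_{k-1}^\alpha$ below. List $\langle\gamma\rangle$ increasingly as $a_0\gamma<\dots<a_{q^{s-1}-1}\gamma$. Define $G_1^\beta=(1)$ and, for $k>1$, $G_k^\beta$ as the matrix with column blocks: first a block with first row $\mathbf{1}^{(q^{s(k-1)})}$ and $G_{k-1}^\alpha$ below; then for each $j=0,\dots,q^{s-1}-1$ a block with first row the constant vector with entry $a_j\gamma$ and $G_{k-1}^\beta$ below. $\mathcal{S}_k^\beta$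 is the $R$-submodule generated by the rows of $G_k^\beta$. $w_H$ is the Hamming weight. Valuation: for $x\in R\setminus\{0\}$, $\nu(x)$ is the largest $m$ with $x=\gamma^m\beta$, $\beta$ a unit; $\nu(0)=\infty$; for $x\in R^n$, $\nu(x)=\min_i\nu(x_i)$. *)

From HB Require Import structures.
From mathcomp Require Import all_boot all_order all_algebra.
Set Implicit Arguments. Unset Strict Implicit. Unset Printing Implicit Defensive.
Import Order.TTheory GRing.Theory.
Local Open Scope ring_scope.

Section ChainRing.
Variable R : finComUnitRingType.

Definition is_ideal (I : {set R}) : bool :=
  [&& 0 \in I,
      [forall x in I, forall y in I, x + y \in I] &
      [forall r : R, forall x in I, r * x \in I]].

Definition pideal (g : R) : {set R} := [set g * y | y : R].

Definition chain_ring_with (g : R) (s : nat) : Prop :=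
  [/\ (forall I J : {set R}, is_ideal I -> is_ideal J ->
          (I \subset J) \/ (J \subset I)),
      is_ideal (pideal g) /\ pideal g != [set: R]
      /\ (forall J : {set R}, is_ideal J -> pideal g \subset J ->
            J = pideal g \/ J = [set: R]),
      (0 < s)%N, g ^+ s = 0 & g ^+ s.-1 != 0].

(* T = [:: e_0; ...; e_{q-1}] is a list of coset representatives of R/<g>,
   listed in increasing order, with e_0 = 0 and e_1 = 1. *)
Definition coset_reps (g : R) (T : seq R) : Prop :=
  [/\ uniq T, (1 < size T)%N, T`_0 = 0, T`_1 = 1 &
      forall r : R, exists! i : 'I_(size T), r - T`_i \in pideal g].

Definition digits (g : R) (s : nat) (T : seq R) (r : R)
  : option {ffun 'I_s -> 'I_(size T)} :=
  [pick d : {ffun 'I_s -> 'I_(size T)} |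
     r == \sum_(i < s) T`_(d i) * g ^+ i].

(* key r = \sum_i d_i q^i : comparing keys is the order on R of the paper
   (largest index with differing digits decides). *)
Definition rkey (g : R) (s : nat) (T : seq R) (r : R) : nat :=
  if digits g s T r is Some d then (\sum_(i < s) d i * (size T) ^ i)%N else 0%N.

Definition rho_list (g : R) (s : nat) (T : seq R) : seq R :=
  sort (fun x y => (rkey g s T x <= rkey g s T y)%N) (enum R).

Definition gamma_list (g : R) (s : nat) (T : seq R) : seq R :=
  [seq x <- rho_list g s T | x \in pideal g].

(* Matrices are given as the list of their columns (each a seq R, top entry
   first).  Galpha m = G_m^alpha for m >= 1 (Galpha 0 is one empty column). *)
Fixpoint Galpha (g : R) (s : nat) (T : seq R) (m : nat) : seq (seq R) :=
  match m with
  | 0 => [:: [::]]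
  | m'.+1 => flatten [seq [seq rj :: col | col <- Galpha g s T m']
                     | rj <- rho_list g s T]
  end.

(* Gbeta_aux n = G_{n+1}^beta *)
Fixpoint Gbeta_aux (g : R) (s : nat) (T : seq R) (n : nat) : seq (seq R) :=
  match n with
  | 0 => [:: [:: 1]]
  | n'.+1 => [seq 1 :: col | col <- Galpha g s T n'.+1] ++
             flatten [seq [seq a :: col | col <- Gbeta_aux g s T n']
                     | a <- gamma_list g s T]
  end.

Definition Gbeta (g : R) (s : nat) (T : seq R) (k : nat) : seq (seq R) :=
  Gbeta_aux g s T k.-1.

(* S_k^beta : the R-submodule generated by the k rows of G_k^beta *)
Definition in_Sbeta (g : R) (s : nat) (T : seq R) (k : nat) (c : seq R) : Prop :=
  exists lam : 'I_k -> R,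
    c = [seq \sum_(i < k) lam i * col`_i | col <- Gbeta g s T k].

Definition wH (c : seq R) : nat := count (fun x => x != 0) c.

(* valuation of a nonzero element: largest m with x = g^m * beta, beta a unit
   (such m is < s since g^s = 0); the value at 0 is irrelevant below. *)
Definition nu (g : R) (s : nat) (x : R) : nat :=
  (\max_(m < s | [exists b : R, (b \is a GRing.unit) && (x == (g ^+ m * b)%R)]) m)%N.

(* valuation of a vector: minimum over its (nonzero) entries;
   entries equal to 0 have valuation infinity and are skipped. *)
Definition nuv (g : R) (s : nat) (c : seq R) : nat :=
  foldr minn s [seq nu g s x | x <- c & x != 0].

End ChainRing.

(* L_beta(m) = q^{(s-1)(m-1)} (q^m - 1)/(q - 1)  (exact division) *)
Definition Lbeta (q s m : nat) : nat :=
  (q ^ ((s - 1) * (m - 1)) * ((q ^ m - 1) %/ (q - 1)))%N.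

(* A codeword of S_k^beta is c = (l . v)_v, v running over the columns of
   G_k^beta, for a coefficient vector l; since the columns include the unit
   vectors, nu(c) = nu(l).  G_k^alpha lists all of R^k, and the columns of
   G_k^beta are representatives, up to multiplication by units, of the vectors
   of R^k having a unit coordinate.  Hence for every unit-invariant count F,
     #units * sum_{G^beta} F = sum_{R^k} F - sum_{<g>^k} F,
   and sum_{<g>^k} F(v) = q^-k sum_{R^k} F(g v).  With F = 1 this gives the
   length L_beta(k) of the code; with F(v) = [l . v = 0], using that the
   equation l . v = 0 has q^(s(k-1) + nu(l)) solutions in R^k, it gives the
   number q^nu(l) L_beta(k-1) of zero coordinates of c. *)

From HB Require Import structures.
From mathcomp Require Import all_boot all_order all_algebra.
From mathcomp Require Import ring zify.
Set Implicit Arguments. Unset Strict Implicit. Unset Printing Implicit Defensive.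
Import GRing.Theory.
Local Open Scope ring_scope.

Section Dot.
Variable R : comPzRingType.
Implicit Types (a u : R) (l v : seq R).

Fixpoint dot l v : R :=
  if l is a :: l' then (if v is b :: v' then a * b + dot l' v' else 0) else 0.

Definition scale u v := map (fun x => u * x) v.

Lemma dot_nseq0 l m : dot l (nseq m 0) = 0.
Proof. by elim: l m => [|a l IH] [|m] //=; rewrite mulr0 add0r IH. Qed.

Lemma dot_sum l v : size v = size l -> dot l v = \sum_(i < size l) l`_i * v`_i.
Proof.
elim: l v => [|a l IH] [|b v] //=; first by rewrite big_ord0.
by move=> [hv]; rewrite big_ord_recl /= IH.
Qed.

Lemma dot_scaler l v u : dot l (scale u v) = u * dot l v.
Proof. by elim: l v => [|a l IH] [|b v] /=; rewrite ?mulr0 // IH mulrDr mulrCA. Qed.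

Lemma dot_scale_swap l v u : dot l (scale u v) = dot (scale u l) v.
Proof. by elim: l v => [|a l IH] [|b v] //=; rewrite IH mulrCA mulrA. Qed.

End Dot.

Section PrincipalIdeal.
Variable R : finComUnitRingType.
Implicit Types a r u x y : R.

Lemma pidealP a x : reflect (exists y, x = a * y) (x \in pideal a).
Proof. by apply: (iffP imsetP) => [[y _ ->]|[y ->]]; exists y. Qed.

Lemma pidealM a y : a * y \in pideal a.
Proof. by apply/pidealP; exists y. Qed.

Lemma pideal_id a : a \in pideal a.
Proof. by rewrite -[X in X \in _]mulr1 pidealM. Qed.

Lemma pideal0 a : 0 \in pideal a.
Proof. by rewrite -(mulr0 a) pidealM. Qed.

Lemma pidealD a x y : x \in pideal a -> y \in pideal a -> x + y \in pideal a.
Proof. by move=> /pidealP[x' ->] /pidealP[y' ->]; rewrite -mulrDr pidealM. Qed.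

Lemma pidealN a x : x \in pideal a -> - x \in pideal a.
Proof. by move=> /pidealP[x' ->]; rewrite -mulrN pidealM. Qed.

Lemma pidealB a x y : x \in pideal a -> y \in pideal a -> x - y \in pideal a.
Proof. by move=> hx /pidealN; apply: pidealD. Qed.

Lemma pidealMl a r x : x \in pideal a -> r * x \in pideal a.
Proof. by move=> /pidealP[x' ->]; rewrite mulrCA pidealM. Qed.

Lemma pidealDr a x y : y \in pideal a -> (x + y \in pideal a) = (x \in pideal a).
Proof.
move=> hy; apply/idP/idP => [hxy|hx]; last exact: pidealD.
by rewrite -(addrK y x); apply: pidealB.
Qed.

Lemma pidealMr_unit a u : u \is a GRing.unit -> forall r, (u * r \in pideal a) = (r \in pideal a).
Proof.
move=> uU r; apply/idP/idP => [ur|]; last exact: pidealMl.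
by rewrite -(mulKr uU r); apply: pidealMl.
Qed.

Lemma pideal_is_ideal a : is_ideal (pideal a).
Proof.
apply/and3P; split; first exact: pideal0.
- by apply/forall_inP => x hx; apply/forall_inP => y; apply: pidealD.
- by apply/forallP => r; apply/forall_inP => x; apply: pidealMl.
Qed.

Lemma pideal1 : pideal (1 : R) = [set: R].
Proof. by apply/setP => x; rewrite inE -[x]mul1r pidealM. Qed.

Lemma in_pideal0 x : (x \in pideal (0 : R)) = (x == 0).
Proof. by apply/pidealP/eqP => [[y ->]|->]; [rewrite mul0r | exists 0; rewrite mul0r]. Qed.

Lemma pidealXS (g : R) i j x : (i <= j)%N -> x \in pideal (g ^+ j) -> x \in pideal (g ^+ i).
Proof. by move=> hij /pidealP[y ->]; rewrite -(subnKC hij) exprD -mulrA pidealM. Qed.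

End PrincipalIdeal.

Lemma dot_pideal (R : finComUnitRingType) (l v : seq R) (a : R) :
  all (fun x => x \in pideal a) l -> dot l v \in pideal a.
Proof.
elim: l v => [|x l IH] [|b v] /=; rewrite ?pideal0 // => /andP[xa la].
by apply: pidealD; [rewrite mulrC pidealMl | apply: IH].
Qed.


Section ChainRing.
Variable R : finComUnitRingType.
Variables (g : R) (s : nat).
Hypothesis chainR : chain_ring_with g s.
Implicit Types x z : R.

Lemma s_gt0 : (0 < s)%N.
Proof. by case: chainR. Qed.

Lemma expg_s : g ^+ s = 0.
Proof. by case: chainR. Qed.

Lemma expg_neq0 j : (j < s)%N -> g ^+ j != 0.
Proof.
case: chainR => _ _ _ _ gs1 hj; apply: contra gs1 => /eqP gj0.
by rewrite -(subnKC (_ : j <= s.-1)%N) ?exprD ?gj0 ?mul0r //; lia.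
Qed.

Lemma in_pidealXs x : (x \in pideal (g ^+ s)) = (x == 0).
Proof. by rewrite expg_s in_pideal0. Qed.

(* A non-unit generates a proper ideal, which lies in <g> by totality and maximality. *)
Lemma unitr_pideal x : (x \is a GRing.unit) = (x \notin pideal g).
Proof.
case: chainR => total [_ [g_proper g_max]] _ _ _.
apply/idP/idP => [xU|x_notin_g].
  apply: contra g_proper => /pidealP[y xy]; apply/eqP/setP => z; rewrite inE.
  by apply/pidealP; exists (y * x^-1 * z); rewrite !mulrA -xy mulrV // mul1r.
have [/subsetP/(_ x (pideal_id x))|sub] := total _ _ (pideal_is_ideal x) (pideal_is_ideal g).
  by rewrite (negbTE x_notin_g).
case: (g_max _ (pideal_is_ideal x) sub) => [xg|xR].
  by move: (pideal_id x); rewrite xg (negbTE x_notin_g).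
have /pidealP[y hy] : 1 \in pideal x by rewrite xR inE.
by apply/unitrPr; exists y.
Qed.

Lemma mulgX_eq0_pideal j z : (j < s)%N -> g ^+ j * z = 0 -> z \in pideal g.
Proof.
move=> hj gjz0; apply: contraT; rewrite -unitr_pideal => zU.
by move: (expg_neq0 hj); rewrite -(mulrK zU (g ^+ j)) gjz0 mul0r eqxx.
Qed.

Lemma pidealX_mulgX mu d z : (mu + d <= s)%N ->
  g ^+ mu * z \in pideal (g ^+ (mu + d)) -> z \in pideal (g ^+ d).
Proof.
elim: d z => [|d IH] z hs hz; first by rewrite expr0 pideal1 inE.
have hz' : g ^+ mu * z \in pideal (g ^+ (mu + d)) by apply: pidealXS hz; rewrite addnS.
rewrite addnS in hs hz.
have /pidealP[w zw] := IH z (ltnW hs) hz'.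
move: hz => /pidealP[y]; rewrite zw mulrA -exprD exprS => gw.
have /(mulgX_eq0_pideal hs)/pidealP[w' ww'] : g ^+ (mu + d) * (w - g * y) = 0.
  by rewrite mulrBr gw mulrA [g * _]mulrC subrr.
by rewrite -(subrK (g * y) w) ww' -mulrDr mulrA -exprSr pidealM.
Qed.

Lemma pidealX_mulgXE mu j z : (mu <= j <= s)%N ->
  (g ^+ mu * z \in pideal (g ^+ j)) = (z \in pideal (g ^+ (j - mu))).
Proof.
case/andP=> h1 h2; apply/idP/idP => [|/pidealP[y ->]].
  by move=> h; apply: (pidealX_mulgX (mu := mu)); rewrite subnKC.
by rewrite mulrA -exprD subnKC // pidealM.
Qed.

End ChainRing.

Section Cardinality.
Variable R : finComUnitRingType.
Variables (g : R) (s : nat) (T : seq R).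
Hypothesis chainR : chain_ring_with g s.
Hypothesis repsT : coset_reps g T.
Local Notation q := (size T).

Lemma q_gt1 : (1 < q)%N.
Proof. by case: repsT. Qed.

Lemma expq_gt0 e : (0 < q ^ e)%N.
Proof. by rewrite expn_gt0 (ltnW q_gt1). Qed.

Lemma coset_reps_inj (i i' : 'I_q) : T`_i - T`_i' \in pideal g -> i = i'.
Proof.
case: repsT => _ _ _ _ /(_ T`_i) [i0 [_ uniq_i0]] h.
by rewrite -(uniq_i0 i) ?subrr ?pideal0 // (uniq_i0 i').
Qed.

Lemma card_pidealXS j : (j < s)%N ->
  #|pideal (g ^+ j)| = (q * #|pideal (g ^+ j.+1)|)%N.
Proof.
move=> hj; pose f (p : 'I_q * R) := g ^+ j * T`_(p.1) + p.2.
have -> : pideal (g ^+ j) = f @: setX [set: 'I_q] (pideal (g ^+ j.+1)).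
  apply/setP => x; apply/idP/imsetP => [/pidealP[r ->]|[[i y]]].
    case: repsT => _ _ _ _ /(_ r) [i [/pidealP[w hw] _]].
    exists (i, g ^+ j.+1 * w); first by rewrite in_setX inE pidealM.
    by rewrite /f /= exprSr -mulrA -hw mulrBr addrC subrK.
  rewrite in_setX /= => /andP[_ hy] ->.
  by rewrite /f /= pidealDr ?pidealM // (pidealXS (leqnSn j)).
rewrite card_in_imset ?cardsX ?cardsT ?card_ord // => -[i y] [i' y'].
rewrite !in_setX /= => /andP[_ hy] /andP[_ hy'] eq_f.
have hT : g ^+ j * (T`_i - T`_i') \in pideal (g ^+ (j + 1)).
  suff -> : g ^+ j * (T`_i - T`_i') = y' - y by rewrite addn1 pidealB.
  rewrite /f /= in eq_f; rewrite mulrBr.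
  transitivity (g ^+ j * T`_i + y - (g ^+ j * T`_i' + y') + (y' - y)); first by ring.
  by rewrite eq_f subrr add0r.
have /coset_reps_inj eq_i : T`_i - T`_i' \in pideal g.
  by move: hT; rewrite -[g in pideal g]expr1; apply: (pidealX_mulgX chainR); rewrite addn1.
by subst i'; congr pair; apply: (addrI (g ^+ j * T`_i)).
Qed.

Lemma card_pidealX j : (j <= s)%N -> #|pideal (g ^+ j)| = (q ^ (s - j))%N.
Proof.
move=> hj; rewrite -{1}(subKn hj).
elim: (s - j)%N (leq_subr j s) => [|d IH] hd.
  suff -> : pideal (g ^+ (s - 0)) = [set 0] by rewrite cards1.
  by apply/setP => x; rewrite subn0 inE (in_pidealXs chainR).
rewrite card_pidealXS; last by lia.
by rewrite (_ : (s - d.+1).+1 = s - d)%N ?IH -?expnS //; lia.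
Qed.

Lemma card_R : #|R| = (q ^ s)%N.
Proof. by rewrite -cardsT -pideal1 -(expr0 g) card_pidealX // subn0. Qed.

Lemma card_units : #|~: pideal g| = (q ^ s.-1 * (q - 1))%N.
Proof.
have := cardsC (pideal g); rewrite card_R -[g in pideal g]expr1.
rewrite card_pidealX ?(s_gt0 chainR) // subn1 mulnBr muln1 -expnSr prednK ?(s_gt0 chainR) //.
by move=> <-; rewrite addKn.
Qed.

End Cardinality.

Section Valuation.
Variable R : finComUnitRingType.
Variables (g : R) (s : nat).
Hypothesis chainR : chain_ring_with g s.
Implicit Types (u x : R) (l : seq R).

(* Unlike [nu], this valuation is [s] (standing for infinity) at [0]. *)
Definition gval x : nat := (\max_(j < s.+1 | x \in pideal (g ^+ j)) j)%N.

Definition gvals l : nat := foldr minn s (map gval l).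

Lemma gval_le x : (gval x <= s)%N.
Proof. by apply/bigmax_leqP => i _; rewrite -ltnS. Qed.

Lemma pideal_gval x : x \in pideal (g ^+ gval x).
Proof.
rewrite /gval; have [|i0 hi0 ->] := eq_bigmax_cond (fun j : 'I_s.+1 => nat_of_ord j)
   (A := fun j : 'I_s.+1 => x \in pideal (g ^+ j)).
  by apply/card_gt0P; exists ord0; rewrite unfold_in /= expr0 pideal1 inE.
exact: hi0.
Qed.

Lemma gvalP x j : (j <= s)%N -> (x \in pideal (g ^+ j)) = (j <= gval x)%N.
Proof.
move=> hj; apply/idP/idP => [xj|jx]; last exact: pidealXS jx (pideal_gval x).
exact: (@leq_bigmax_cond _ (fun j : 'I_s.+1 => x \in pideal (g ^+ j)) val
  (Ordinal (hj : (j < s.+1)%N))).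
Qed.

Lemma gval0 : gval 0 = s.
Proof. by apply/eqP; rewrite eqn_leq gval_le -gvalP // pideal0. Qed.

Lemma gval_lt x : x != 0 -> (gval x < s)%N.
Proof.
move=> x0; rewrite ltn_neqAle gval_le andbT; apply: contra x0 => /eqP gx.
by rewrite -(in_pidealXs chainR) -gx pideal_gval.
Qed.

Lemma gval_unit_decomp x : x != 0 -> exists2 u, u \is a GRing.unit & x = g ^+ gval x * u.
Proof.
move=> x0; have /pidealP[u xu] := pideal_gval x.
exists u => //; rewrite (unitr_pideal chainR); apply/negP => /pidealP[w uw].
have : x \in pideal (g ^+ (gval x).+1) by rewrite {1}xu uw mulrA -exprSr pidealM.
by rewrite gvalP ?ltnn // gval_lt.
Qed.

Lemma gval_mulgX_unit x m u : u \is a GRing.unit -> x = g ^+ m * u -> x != 0 -> gval x = m.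
Proof.
move=> uU -> x0; have ms : (m < s)%N.
  rewrite ltnNge; apply: contra x0 => sm.
  by rewrite -(subnKC sm) exprD (expg_s chainR) !mul0r.
apply/eqP; rewrite eqn_leq -gvalP ?(ltnW ms) ?pidealM // andbT leqNgt -gvalP //.
apply/negP => /pidealP[y]; rewrite exprSr -mulrA => /eqP.
rewrite -subr_eq0 -mulrBr => /eqP/(mulgX_eq0_pideal chainR ms)/pidealP[z] /eqP.
rewrite subr_eq => /eqP uz; move: uU.
by rewrite uz -mulrDr (unitr_pideal chainR) pidealM.
Qed.

Lemma nu_gval x : x != 0 -> nu g s x = gval x.
Proof.
move=> x0; apply/eqP; rewrite eqn_leq; apply/andP; split.
  apply/bigmax_leqP => m /existsP[u /andP[uU /eqP xmu]].
  by rewrite (gval_mulgX_unit uU xmu x0).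
have [u uU xu] := gval_unit_decomp x0.
apply: (@leq_bigmax_cond _ _ val (Ordinal (gval_lt x0))).
by apply/existsP; exists u; rewrite uU; apply/eqP.
Qed.

Lemma gvalMg x : gval (g * x) = minn (gval x).+1 s.
Proof.
apply/eqP; rewrite eqn_leq leq_min gval_le andbT; apply/andP; split.
  case: (posnP (gval (g * x))) => [-> //|gx_gt0].
  have := pideal_gval (g * x); move: gx_gt0 (gval_le (g * x)).
  set n := gval (g * x) => n_gt0 n_le.
  rewrite -[g in g * x]expr1 (pidealX_mulgXE chainR) ?n_gt0 ?n_le // gvalP; first lia.
  exact: leq_trans (leq_subr _ _) n_le.
rewrite -gvalP ?geq_minr //; apply: (pidealXS (geq_minl _ _)).
by have /pidealP[y xy] := pideal_gval x; rewrite {1}xy mulrA -exprS pidealM.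
Qed.

Lemma gvals_nil : gvals [::] = s.
Proof. by []. Qed.

Lemma gvals_cons x l : gvals (x :: l) = minn (gval x) (gvals l).
Proof. by []. Qed.

Lemma gvals_le l : (gvals l <= s)%N.
Proof. by elim: l => [|x l IH] //; rewrite gvals_cons geq_min IH orbT. Qed.

Lemma gvalsP l j : (j <= s)%N -> (j <= gvals l)%N = all (fun x => x \in pideal (g ^+ j)) l.
Proof. by move=> hj; elim: l => [|x l IH] //=; rewrite gvals_cons leq_min IH gvalP. Qed.

Lemma gvals_scaleg l : gvals (scale g l) = minn (gvals l).+1 s.
Proof.
elim: l => [|x l IH] /=; first by rewrite gvals_nil; lia.
by rewrite !gvals_cons IH gvalMg; have := gvals_le l; have := gval_le x; lia.
Qed.

Lemma gvals_le_mem l x : x \in l -> (gvals l <= gval x)%N.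
Proof.
elim: l => [|y l IH] //; rewrite inE gvals_cons => /orP[/eqP ->|/IH]; first exact: geq_minl.
exact: leq_trans (geq_minr _ _).
Qed.

Lemma nuv_gvals l : nuv g s l = gvals l.
Proof.
rewrite /nuv; elim: l => [|x l IH] //=.
have [->|x0] /= := eqVneq x 0; last by rewrite IH gvals_cons nu_gval.
by rewrite IH gvals_cons gval0; have := gvals_le l; lia.
Qed.

End Valuation.

Section Generators.
Variable R : finComUnitRingType.
Variables (g : R) (s : nat) (T : seq R).
Implicit Types (l v : seq R) (F : seq R -> nat).

Lemma perm_rho_list : perm_eq (rho_list g s T) (enum R).
Proof. by rewrite perm_sort. Qed.

Lemma big_rho_list (P : pred R) (F : R -> nat) :
  (\sum_(r <- rho_list g s T | P r) F r = \sum_(r | P r) F r)%N.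
Proof. by rewrite (perm_big _ perm_rho_list) big_enum_cond. Qed.

Lemma big_GalphaS_cond m (P : pred (seq R)) F :
  (\sum_(v <- Galpha g s T m.+1 | P v) F v =
   \sum_(r : R) \sum_(v <- Galpha g s T m | P (r :: v)) F (r :: v))%N.
Proof.
rewrite /= big_flatten /= big_map big_rho_list.
by apply: eq_bigr => r _; rewrite big_map.
Qed.

Lemma big_GalphaS m F :
  (\sum_(v <- Galpha g s T m.+1) F v =
   \sum_(r : R) \sum_(v <- Galpha g s T m) F (r :: v))%N.
Proof. exact: big_GalphaS_cond. Qed.

Lemma big_GbetaS n F :
  (\sum_(v <- Gbeta_aux g s T n.+1) F v =
   \sum_(v <- Galpha g s T n.+1) F (1%R :: v) +
   \sum_(a | a \in pideal g) \sum_(v <- Gbeta_aux g s T n) F (a :: v))%N.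
Proof.
rewrite [Gbeta_aux _ _ _ _.+1]/= big_cat big_map; congr addn.
rewrite big_flatten big_map /gamma_list big_filter big_rho_list.
by apply: eq_bigr => a _; rewrite big_map.
Qed.

Lemma mem_Galpha m v : size v = m -> v \in Galpha g s T m.
Proof.
elim: m v => [|m IH] [|r v] //= [/IH v_in]; apply/flattenP.
exists [seq r :: w | w <- Galpha g s T m]; last exact: map_f.
by apply: (map_f (fun r => [seq r :: w | w <- Galpha g s T m])); rewrite mem_sort mem_enum.
Qed.

Lemma size_Galpha_col m v : v \in Galpha g s T m -> size v = m.
Proof.
elim: m v => [|m IH] v /=; first by rewrite inE => /eqP ->.
by move/flattenP => [_ /mapP[r _ ->] /mapP[w /IH w_m ->]] /=; rewrite w_m.
Qed.

Lemma size_Gbeta_col n v : v \in Gbeta_aux g s T n -> size v = n.+1.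
Proof.
elim: n v => [|n IH] v; first by rewrite /= inE => /eqP ->.
rewrite [Gbeta_aux _ _ _ _]/= mem_cat.
case/orP => [/mapP[w w_in ->]|/flattenP[_ /mapP[r _ ->] /mapP[w w_in ->]]] /=.
  by rewrite (@size_Galpha_col n.+1 w w_in).
by rewrite (IH _ w_in).
Qed.

Lemma Gbeta_coord n l i : size l = n.+1 -> (i < n.+1)%N ->
  exists2 v, v \in Gbeta_aux g s T n & dot l v = l`_i.
Proof.
elim: n l i => [|n IH] [|a l] i //=.
  case: l => // _; case: i => // _; exists [:: 1]; first by rewrite inE.
  by rewrite /= mulr1 addr0.
move=> [hl]; case: i => [_|i hi].
  exists (1 :: nseq n.+1 0); last by rewrite /= mulr1 (dot_nseq0 l n.+1) addr0.
  by rewrite mem_cat map_f // (@mem_Galpha n.+1) // size_nseq.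
have [v v_in lv] := IH l i hl hi.
exists (0 :: v); last by rewrite /= mulr0 add0r lv.
rewrite mem_cat; apply/orP; right; apply/flattenP.
exists [seq 0 :: w | w <- Gbeta_aux g s T n]; last exact: map_f.
apply: (map_f (fun a => [seq a :: w | w <- Gbeta_aux g s T n])).
by rewrite mem_filter pideal0 mem_sort mem_enum.
Qed.

End Generators.

Lemma big_mulr_unit (R : finComUnitRingType) (P : pred R) (u : R) (F : R -> nat) :
  u \is a GRing.unit -> (forall r, P (u * r) = P r) ->
  (\sum_(r | P r) F (u * r)%R = \sum_(r | P r) F r)%N.
Proof.
by move=> uU Pu; rewrite [RHS](reindex_inj (mulrI uU)); apply: eq_bigl => r; rewrite Pu.
Qed.

Section Counting.
Variable R : finComUnitRingType.
Variables (g : R) (s : nat) (T : seq R).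
Hypothesis chainR : chain_ring_with g s.
Hypothesis repsT : coset_reps g T.
Local Notation q := (size T).
Local Notation gval := (gval g s).
Local Notation gvals := (gvals g s).
Implicit Types (a t x : R) (l v : seq R) (F : seq R -> nat).

Lemma sum_pidealX_affine mu j x : (mu <= j <= s)%N ->
  (\sum_(r : R) ((x + g ^+ mu * r)%R \in pideal (g ^+ j)) =
   (x \in pideal (g ^+ mu)) * q ^ (s - j + mu))%N.
Proof.
case/andP=> mu_j j_s; have [/pidealP[w ->]|x_notin] := boolP (x \in pideal (g ^+ mu)).
  under eq_bigr do rewrite -mulrDr (pidealX_mulgXE chainR) ?mu_j //.
  rewrite mul1n [LHS](reindex_inj (addIr (- w))) /=.
  under eq_bigr do rewrite addrC subrK.
  rewrite (_ : s - j + mu = s - (j - mu))%N; last by lia.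
  rewrite -(card_pidealX chainR repsT); last by lia.
  by rewrite -sum1_card [RHS]big_mkcond; apply: eq_bigr => r _; case: (_ \in _).
rewrite big1 // => r _; apply/eqP; rewrite eqb0; apply: contra x_notin => xr.
by rewrite -(pidealDr _ (pidealM _ r)); apply: pidealXS xr.
Qed.

Lemma sum_pideal_affine a t j : (j <= s)%N ->
  (\sum_(r : R) ((t + a * r)%R \in pideal (g ^+ j)) =
   (t \in pideal (g ^+ minn (gval a) j)) * q ^ (s - j + minn (gval a) j))%N.
Proof.
move=> j_s; have [j_a|a_j] := leqP j (gval a).
  rewrite subnK //.
  rewrite (eq_bigr (fun=> nat_of_bool (t \in pideal (g ^+ j)))) => [|r _]; last first.
    by rewrite pidealDr // mulrC pidealMl // (gvalP _ _ j_s).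
  by rewrite sum_nat_const (card_R chainR repsT) mulnC.
have a0 : a != 0 by apply: contraTneq a_j => ->; rewrite gval0 -leqNgt.
have [u uU au] := gval_unit_decomp chainR a0.
rewrite -sum_pidealX_affine ?(ltnW a_j) ?j_s //.
rewrite {1}au; under eq_bigr => r _ do rewrite -mulrA.
exact: (big_mulr_unit (P := predT) (fun r => t + g ^+ gval a * r \in pideal (g ^+ j)) uU).
Qed.

Lemma card_mulg_fiber y : y \in pideal g -> (\sum_(r : R) (g * r == y)%R)%N = q.
Proof.
move=> yg; have := sum_pidealX_affine (- y) (mu := 1) (j := s).
rewrite (s_gt0 chainR) leqnn => /(_ isT); rewrite expr1 pidealN // subnn expn1 mul1n => <-.
by apply: eq_bigr => r _; rewrite (in_pidealXs chainR) addrC subr_eq0.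
Qed.

(* Multiplication by [g] maps [R] onto [<g>] with fibres of size [q]. *)
Lemma sum_pideal_mulg (F : R -> nat) :
  (\sum_(r | r \in pideal g) F r * q = \sum_(r : R) F (g * r)%R)%N.
Proof.
rewrite [RHS](partition_big (fun r => g * r) (mem (pideal g))) => [|r _]; last exact: pidealM.
apply: eq_bigr => y yg; rewrite -(card_mulg_fiber yg) big_distrr [RHS]big_mkcond /=.
by apply: eq_bigr => r _; case: eqP => [->|]; rewrite ?muln1 ?muln0.
Qed.

Lemma sum_Galpha_affine_dot l t :
  ((\sum_(v <- Galpha g s T (size l)) (t + dot l v == 0)%R) * q ^ (s - gvals l) =
   (t \in pideal (g ^+ gvals l)) * q ^ (s * size l))%N.
Proof.
elim: l t => [|a l IH] t.
  by rewrite /= big_seq1 addr0 gvals_nil subnn muln0 !muln1 (in_pidealXs chainR).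
have nu_s := gvals_le g s l; set nu := gvals l in IH nu_s.
rewrite [size _]/= big_GalphaS gvals_cons -/nu.
apply/eqP; rewrite -(eqn_pmul2r (expq_gt0 repsT (s - nu))); apply/eqP.
rewrite mulnAC big_distrl /=.
have inner r :
    ((\sum_(v <- Galpha g s T (size l)) (t + (a * r + dot l v) == 0)%R) * q ^ (s - nu) =
     ((t + a * r)%R \in pideal (g ^+ nu)) * q ^ (s * size l))%N.
  by rewrite -IH; congr (_ * _)%N; apply: eq_bigr => v _; rewrite addrA.
under eq_bigr do rewrite inner.
rewrite -big_distrl /= sum_pideal_affine // -!mulnA -!expnD; congr (_ * q ^ _)%N.
lia.
Qed.

End Counting.

Section Orbits.
Variable R : finComUnitRingType.
Variables (g : R) (s : nat) (T : seq R).
Hypothesis chainR : chain_ring_with g s.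
Hypothesis repsT : coset_reps g T.
Local Notation q := (size T).
Local Notation Galpha := (Galpha g s T).
Local Notation Gbeta_aux := (Gbeta_aux g s T).
Local Notation in_maxideal := (all (fun x : R => x \in pideal g)).
Implicit Types (u : R) (v w : seq R) (F : seq R -> nat).

Definition unit_invariant F := forall u v, u \is a GRing.unit -> F (scale u v) = F v.

Lemma big_Galpha_scale_unit m u F : u \is a GRing.unit ->
  (\sum_(v <- Galpha m) F (scale u v) = \sum_(v <- Galpha m) F v)%N.
Proof.
move=> uU; elim: m F => [|m IH] F; first by rewrite /= !big_seq1.
rewrite !big_GalphaS; under eq_bigr => r _ do rewrite (IH (fun w => F (u * r :: w))).
exact: (big_mulr_unit (P := predT) (fun r => \sum_(w <- Galpha m) F (r :: w))%N uU).
Qed.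

Lemma big_GalphaS_maxideal m F :
  (\sum_(v <- Galpha m.+1 | in_maxideal v) F v =
   \sum_(r | r \in pideal g) \sum_(w <- Galpha m | in_maxideal w) F (r :: w))%N.
Proof.
rewrite big_GalphaS_cond [RHS]big_mkcond; apply: eq_bigr => r _ /=.
by case: (r \in pideal g) => //; rewrite big_pred0.
Qed.

Lemma big_Galpha_scaleg m F :
  ((\sum_(v <- Galpha m | in_maxideal v) F v) * q ^ m =
   \sum_(v <- Galpha m) F (scale g v))%N.
Proof.
elim: m F => [|m IH] F; first by rewrite /= !big_cons !big_nil muln1.
rewrite big_GalphaS_maxideal big_GalphaS big_distrl expnS /=.
under eq_bigr => r _ do rewrite mulnCA (IH (fun w => F (r :: w))).
by rewrite -(sum_pideal_mulg chainR repsT (fun r => \sum_(w <- Galpha m) F (r :: scale g w)))%N;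
  apply: eq_bigr => r _; rewrite mulnC.
Qed.

Lemma big_GalphaS_units m F : unit_invariant F ->
  (\sum_(v <- Galpha m.+1) F v =
   \sum_(r | r \in pideal g) \sum_(w <- Galpha m) F (r :: w) +
   #|~: pideal g| * \sum_(w <- Galpha m) F (1%R :: w))%N.
Proof.
move=> F_inv; rewrite big_GalphaS (bigID (fun r => r \in pideal g)) /=; congr addn.
rewrite -sum_nat_const; apply: eq_big => [r|r r_unit]; first by rewrite inE.
have r1U : r^-1 \is a GRing.unit by rewrite unitrV (unitr_pideal chainR).
rewrite -(big_Galpha_scale_unit _ (fun w => F (1%R :: w)) r1U).
by apply: eq_bigr => w _; rewrite -(F_inv r^-1) //= mulVr ?(unitr_pideal chainR).
Qed.

(* Every vector with a unit coordinate is [u * v] for a unique unit [u] and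
   column [v] of [G^beta], whose first non-[<g>] coordinate is [1]. *)
Lemma big_Galpha_orbits n F : unit_invariant F ->
  (#|~: pideal g| * \sum_(v <- Gbeta_aux n) F v + \sum_(v <- Galpha n.+1 | in_maxideal v) F v =
   \sum_(v <- Galpha n.+1) F v)%N.
Proof.
elim: n F => [|n IH] F F_inv.
  rewrite big_GalphaS_units // big_GalphaS_maxideal /= !big_seq1 addnC; congr addn.
  by apply: eq_bigr => r _; rewrite big_cons big_nil big_seq1 addn0.
pose G w := (\sum_(a | a \in pideal g) F (a :: w))%N.
have G_inv : unit_invariant G.
  move=> u w uU; rewrite /G -(big_mulr_unit _ uU (pidealMr_unit g uU)).
  by apply: eq_bigr => a _; apply: (F_inv u (a :: w)).
have sum_G (L : seq (seq R)) (Q : pred (seq R)) :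
    (\sum_(a | a \in pideal g) \sum_(w <- L | Q w) F (a :: w) = \sum_(w <- L | Q w) G w)%N.
  by rewrite exchange_big.
rewrite [in RHS]big_GalphaS_units // big_GbetaS big_GalphaS_maxideal !sum_G -(IH G G_inv).
ring.
Qed.

End Orbits.

Lemma geom_sum_nat q j : (0 < q)%N -> ((q - 1) * ((q ^ j - 1) %/ (q - 1)) + 1 = q ^ j)%N.
Proof.
move=> q_gt0; have [q1|q_gt1] := leqP q 1.
  have -> : q = 1%N by lia.
  by rewrite exp1n subnn mul0n.
by rewrite !subn1 predn_exp mulKn -?predn_exp ?addn1 ?prednK ?expn_gt0 ?q_gt0 //; lia.
Qed.

Lemma Lbeta_spec q s m : (0 < q)%N -> (0 < s)%N ->
  (q ^ s.-1 * (q - 1) * Lbeta q s m + q ^ (s.-1 * m) = q ^ (s * m))%N.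
Proof.
move=> q_gt0 s_gt0; case: m => [|m]; first by rewrite /Lbeta expn0 subnn div0n !muln0.
rewrite /Lbeta [(s - 1)%N]subn1 [(m.+1 - 1)%N]subn1 /=; set G := (_ %/ _)%N.
have -> : (q ^ s.-1 * (q - 1) * (q ^ (s.-1 * m) * G) = q ^ (s.-1 * m.+1) * ((q - 1) * G))%N.
  by rewrite mulnS expnD -!mulnA; congr (_ * _)%N; rewrite mulnCA.
rewrite -[X in (_ + X)%N]muln1 -mulnDr geom_sum_nat // -expnD; congr (q ^ _)%N.
by rewrite -[in RHS](prednK s_gt0) mulSn addnC.
Qed.

Lemma Lbeta_unique q s m e x : (1 < q)%N -> (0 < s)%N ->
  (q ^ s.-1 * (q - 1) * x + q ^ (s.-1 * m + e) = q ^ (s * m + e))%N ->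
  x = (q ^ e * Lbeta q s m)%N.
Proof.
move=> q_gt1 s_gt0; have spec := Lbeta_spec m (ltnW q_gt1) s_gt0.
have spec_e : (q ^ s.-1 * (q - 1) * (q ^ e * Lbeta q s m) + q ^ (s.-1 * m + e) =
               q ^ (s * m + e))%N.
  by rewrite !expnD -spec; ring.
rewrite -spec_e => /addIn /eqP.
by rewrite eqn_pmul2l ?muln_gt0 ?expn_gt0 ?subn_gt0 ?q_gt1 ?(ltnW q_gt1) // => /eqP.
Qed.

Lemma mul_expn_eq q a e f : (0 < q)%N -> (a * q ^ e = q ^ (f + e))%N -> a = (q ^ f)%N.
Proof.
by move=> q_gt0; rewrite expnD => /eqP; rewrite eqn_pmul2r ?expn_gt0 ?q_gt0 // => /eqP.
Qed.

Lemma count_sum (X : Type) (P : pred X) (L : seq X) : count P L = (\sum_(x <- L) P x)%N.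
Proof. by rewrite -sum1_count big_mkcond. Qed.

Section Weights.
Variable R : finComUnitRingType.
Variables (g : R) (s : nat) (T : seq R).
Hypothesis chainR : chain_ring_with g s.
Hypothesis repsT : coset_reps g T.
Local Notation q := (size T).
Local Notation gvals := (gvals g s).
Local Notation Galpha := (Galpha g s T).
Local Notation Gbeta_aux := (Gbeta_aux g s T).
Local Notation in_maxideal := (all (fun x : R => x \in pideal g)).
Implicit Types (l v : seq R).

Lemma size_Galpha m : size (Galpha m) = (q ^ (s * m))%N.
Proof.
elim: m => [|m IH]; first by rewrite muln0.
rewrite -sum1_size big_GalphaS /=.
under eq_bigr do rewrite sum1_size IH.
by rewrite sum_nat_const (card_R chainR repsT) -expnD mulnS.
Qed.

Lemma sum_Galpha_dot_eq0 l : (0 < size l)%N ->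
  (\sum_(v <- Galpha (size l)) (dot l v == 0)%R)%N = (q ^ (s * (size l).-1 + gvals l))%N.
Proof.
move=> l_gt0; apply: (mul_expn_eq (e := s - gvals l)); first exact: (ltnW (q_gt1 repsT)).
have := sum_Galpha_affine_dot chainR repsT l 0; rewrite pideal0 mul1n.
under eq_bigr do rewrite add0r.
move=> ->; congr (q ^ _)%N; have := gvals_le g s l; case: (size l) l_gt0 => // m _ /=; lia.
Qed.

Lemma size_Gbeta n : size (Gbeta_aux n) = Lbeta q s n.+1.
Proof.
have all_vecs : (\sum_(v <- Galpha n.+1) 1 = q ^ (s * n.+1))%N by rewrite sum1_size size_Galpha.
have vecs_in_maxideal : (\sum_(v <- Galpha n.+1 | in_maxideal v) 1 = q ^ (s.-1 * n.+1))%N.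
  apply: (mul_expn_eq (e := n.+1) (ltnW (q_gt1 repsT))).
  rewrite big_Galpha_scaleg // all_vecs; congr (q ^ _)%N.
  by rewrite -[in LHS](prednK (s_gt0 chainR)) mulSn addnC.
rewrite -[Lbeta _ _ _]mul1n -(expn0 q); apply: Lbeta_unique (q_gt1 repsT) (s_gt0 chainR) _.
rewrite !addn0 -(card_units chainR repsT) -all_vecs -vecs_in_maxideal -sum1_size.
exact: (big_Galpha_orbits T chainR n (F := fun=> 1%N)).
Qed.

Lemma count_Gbeta_dot_eq0 n l : size l = n.+1 -> (gvals l < s)%N ->
  count (fun v => dot l v == 0)%R (Gbeta_aux n) = (q ^ gvals l * Lbeta q s n)%N.
Proof.
move=> size_l l_lt_s; pose F v := nat_of_bool (dot l v == 0).
have F_inv : unit_invariant F by move=> u v uU; rewrite /F dot_scaler mulrI_eq0 //; apply: mulrI.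
have all_sols : (\sum_(v <- Galpha n.+1) F v = q ^ (s * n + gvals l))%N.
  by rewrite -size_l sum_Galpha_dot_eq0 size_l.
have scale_l : size (scale g l) = n.+1 /\ gvals (scale g l) = (gvals l).+1.
  by rewrite size_map size_l (gvals_scaleg chainR) (minn_idPl l_lt_s).
have sols_in_maxideal :
    (\sum_(v <- Galpha n.+1 | in_maxideal v) F v = q ^ (s.-1 * n + gvals l))%N.
  apply: (mul_expn_eq (e := n.+1) (ltnW (q_gt1 repsT))).
  rewrite big_Galpha_scaleg //; under eq_bigr do rewrite /F dot_scale_swap.
  rewrite -scale_l.1 sum_Galpha_dot_eq0 scale_l.1 ?scale_l.2 //; congr (q ^ _)%N.
  by rewrite /= -[s in (s * _)%N](prednK (s_gt0 chainR)) mulSn; lia.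
apply: Lbeta_unique (q_gt1 repsT) (s_gt0 chainR) _.
rewrite -(card_units chainR repsT) -all_sols -sols_in_maxideal count_sum.
exact: big_Galpha_orbits.
Qed.

End Weights.

Lemma wH_map (R : finComUnitRingType) (X : Type) (f : X -> R) (L : seq X) :
  (wH (map f L) + count (fun x => f x == 0)%R L = size L)%N.
Proof.
by rewrite /wH count_map addnC -(count_predC (fun x => f x == 0)); congr addn; apply: eq_count.
Qed.

Section Codewords.
Variable R : finComUnitRingType.
Variables (g : R) (s : nat) (T : seq R).
Hypothesis chainR : chain_ring_with g s.
Local Notation gvals := (gvals g s).
Local Notation Gbeta_aux := (Gbeta_aux g s T).
Implicit Types (c l v : seq R).

Lemma in_Sbeta_dot n c : in_Sbeta g s T n.+1 c ->
  exists2 l, size l = n.+1 & c = [seq dot l v | v <- Gbeta_aux n].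
Proof.
move=> [lam ->]; exists (mkseq (fun i => lam (inord i)) n.+1); first exact: size_mkseq.
apply/eq_in_map => v /size_Gbeta_col v_size; rewrite dot_sum size_mkseq //.
by apply: eq_bigr => i _; rewrite nth_mkseq // inord_val.
Qed.

Lemma gvals_codeword n l : size l = n.+1 -> gvals [seq dot l v | v <- Gbeta_aux n] = gvals l.
Proof.
move=> size_l; apply/eqP; rewrite eqn_leq !gvalsP ?gvals_le //; apply/andP; split.
  apply/allP => x x_l; have [|v v_in lv] := Gbeta_coord g s T size_l (_ : index x l < n.+1)%N.
    by rewrite -size_l index_mem.
  rewrite (nth_index 0 x_l) in lv; rewrite -lv (gvalP _ _ (gvals_le _ _ _)).
  exact/gvals_le_mem/map_f.
apply/allP => _ /mapP[v _ ->]; apply: dot_pideal.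
by rewrite -(@gvalsP _ g s) ?gvals_le.
Qed.

Lemma gvals_lt_neq0 c : c != nseq (size c) 0 -> (gvals c < s)%N.
Proof.
move=> c_neq0; have [x x_c x_neq0] : exists2 x, x \in c & x != 0.
  apply/hasP; apply: contraNT c_neq0 => /hasPn c0.
  by apply/eqP/all_pred1P/allP => x /c0; rewrite negbK.
exact: leq_ltn_trans (gvals_le_mem g s x_c) (gval_lt chainR x_neq0).
Qed.

End Codewords.

Unset Implicit Arguments.

Theorem corollary3p21 (R : finComUnitRingType) (g : R) (s : nat) (T : seq R)
    (k : nat) (c : seq R) :
  chain_ring_with g s ->
  coset_reps g T ->
  (2 <= k)%N ->
  in_Sbeta g s T k c ->
  c != nseq (size c) 0 ->
  (wH c)%:Z =
    (Lbeta (size T) s k)%:Z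
    - ((size T) ^ (nuv g s c) * Lbeta (size T) s k.-1)%:Z.
Proof.
(* [2 <= k] only serves to exclude [k = 0]. *)
move=> chainR repsT; case: k => [//|n] _ /in_Sbeta_dot[l size_l ->] c_neq0.
have := gvals_lt_neq0 chainR c_neq0; rewrite (gvals_codeword g s T size_l) => l_lt_s.
rewrite (nuv_gvals chainR) (gvals_codeword g s T size_l) /= -(size_Gbeta chainR repsT).
by rewrite -(count_Gbeta_dot_eq0 chainR repsT size_l l_lt_s) -(wH_map (dot l)) PoszD addrK.
Qed.
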